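(* Let $f(y\mid\vec x)$ be a conditional density of $Y\in\mathbb R$ given $\vec X=\vec x\in\mathcal X$ that is continuous in $y$ for every $\vec x$, and suppose the estimate used satisfies $\widehat f=f$. For $\vec x\in\mathcal X$ and $t\ge0$ define the profile $g_{\vec x}(t)=\int_{\{y: f(y\mid\vec x)\ge t\}} f(y\mid\vec x)\,dy$. Let $\vec x_{n+1}\in\mathcal X$ and let $(\vec X_1,Y_1),\ldots,(\vec X_m,Y_m)$ be the samples falling in the same partition element as $\vec x_{n+1}$, where, conditionally on the features $\vec x_1,\ldots,\vec x_m$, the responses $Y_i$ are independent with densities $f(\cdot\mid\vec x_i)$, and assume $g_{\vec x_i}=g_{\vec x_{n+1}}$ for all $i=1,\ldots,m$. Let $T_m=q\big(\alpha;\{f(Y_i\mid\vec x_i):i=1,\ldots,m\}\big)$. Then for every fixed $\alpha\in(0,1)$, $$T_m\xrightarrow[m\to\infty]{\text{a.s.}} t^*,$$ where $t^*=t^*(\vec x_{n+1},\alpha)$ is the cutoff of the oracle band for $f(\cdot\mid\vec x_{n+1})$, i.e. the value such that $\{y: f(y\mid\vec x_{n+1})\ge t^*\}$ is the smallest predictive region with coverage $1-\alpha$ (equivalently $g_{\vec x_{n+1}}(t^* )=1-\alpha$).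
   Context: For a finite set of reals $\{t_1,\ldots,t_m\}$, $q(\beta;\{t_1,\ldots,t_m\})$ denotes its empirical $\beta$ quantile. *)

From HB Require Import structures.
From mathcomp Require Import all_boot all_order all_algebra.
From mathcomp Require Import all_classical all_reals all_analysis.
Set Implicit Arguments. Unset Strict Implicit. Unset Printing Implicit Defensive.
Import Order.TTheory GRing.Theory Num.Theory.
Import numFieldNormedType.Exports.
Local Open Scope classical_set_scope.
Local Open Scope ring_scope.

(* Empirical beta-quantile of a finite multiset (given as a sequence) of reals:
   q(beta; s) = inf { t | #{ i : s_i <= t } >= beta * |s| },
   i.e. the ceil(beta*|s|)-th order statistic for 0 < beta <= 1, |s| >= 1. *)
Definition emp_quantile {R : realType} (beta : R) (s : seq R) : R :=
  inf [set t : R | beta * (size s)%:R <= (count (fun x => x <= t) s)%:R].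

Definition profile {R : realType} {X : Type} (f : X -> R -> R) (x : X) (t : R)
  : \bar R :=
  (\int[@lebesgue_measure R]_(y in [set y | (t <= f x y)%R]) (f x y)%:E)%E.

Definition cont_cond_density {R : realType} {X : Type} (f : X -> R -> R) : Prop :=
  forall x : X,
    [/\ (forall y, 0 <= f x y),
        measurable_fun setT (f x),
        (\int[@lebesgue_measure R]_y (f x y)%:E = 1)%E
      & continuous (f x)].

Definition has_density {d} {R : realType} {Omega : measurableType d}
  (P : probability Omega R) (Y : Omega -> R) (h : R -> R) : Prop :=
  measurable_fun setT Y /\
  forall B : set R, measurable B ->
    P (Y @^-1` B) = (\int[@lebesgue_measure R]_(y in B) (h y)%:E)%E.

Definition mutually_independent {d} {R : realType} {Omega : measurableType d}
  (P : probability Omega R) (Y : nat -> Omega -> R) : Prop :=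
  forall (s : seq nat) (B : nat -> set R), uniq s ->
    (forall i, measurable (B i)) ->
    P (\bigcap_(i in [set` s]) (Y i @^-1` B i)) =
    (\prod_(i <- s) P (Y i @^-1` B i))%E.

From HB Require Import structures.
From mathcomp Require Import all_boot all_order all_algebra.
From mathcomp Require Import all_classical all_reals all_analysis.
From mathcomp Require Import ring lra measurable_realfun.
Import Order.TTheory GRing.Theory Num.Theory.
Import numFieldNormedType.Exports.
Local Open Scope classical_set_scope.
Local Open Scope ring_scope.

(* The scores S_i = f(Y_i | x_i) are independent, and since every profile
   g_{x_i} equals g := g_{x_{n+1}}, they are identically distributed with
   P(S_i >= s) = g(s).  For a continuous density, g is strictly decreasing as
   long as it is positive (between two levels the density takes the
   intermediate values on an interval), so g(t* + e) < 1 - alpha < g(t* - e')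
   for all e, e' > 0.  A Chernoff bound and Borel-Cantelli show that the
   proportion of scores above each of these two levels eventually lies on the
   same side of 1 - alpha almost surely, which traps the empirical
   alpha-quantile in [t* - e, t* + e]. *)

Lemma iota0_index_iota n : iota 0 n = index_iota 0 n.
Proof. by rewrite /index_iota subn0. Qed.

Lemma set_eqbE {T : Type} (A : T -> bool) (b : bool) :
  [set w | A w == b] = if b then [set w | A w] else ~` [set w | A w].
Proof.
by case: b; apply/seteqP; split => w /=; rewrite ?eqbF_neg ?eqb_id // => /negP.
Qed.

Lemma measure_bigsetU_le {d} {T : measurableType d} {R : realType}
    (mu : {measure set T -> \bar R}) {I : Type} (s : seq I) (Q : pred I)
    (F : I -> set T) :
  (forall i, measurable (F i)) ->
  (mu (\big[setU/set0]_(i <- s | Q i) F i) <= \sum_(i <- s | Q i) mu (F i))%E.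
Proof.
move=> mF; elim: s => [|i s IH]; first by rewrite !big_nil measure0.
rewrite !big_cons; case: ifP => _ //.
apply: le_trans (measureU2 _ _ _) _ => //; first exact: bigsetU_measurable.
by rewrite leeD2l.
Qed.

Lemma borel_cantelli_ae {d} {T : measurableType d} {R : realType}
    (mu : {measure set T -> \bar R}) {F : (set T)^nat} :
  (forall n, measurable (F n)) -> (\sum_(n <oo) mu (F n) < +oo)%E ->
  {ae mu, forall w, \forall n \near \oo, ~ F n w}.
Proof.
move=> mF sumF; exists (lim_sup_set F); split.
- by apply: bigcap_measurable => // k _; exact: bigcup_measurable.
- exact: lim_sup_set_cvg0.
move=> w /= notev N _; apply: contrapT => notFN; apply: notev; exists N => // n /= Nn.
by move=> Fnw; apply: notFN; exists n.
Qed.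

Lemma nneseries_geometric_lty {R : realType} {q : R} : 0 < q < 1 ->
  (\sum_(n <oo) (q ^+ n)%:E < +oo)%E.
Proof.
move=> /andP[q0 q1]; apply: (@le_lt_trans _ _ ((1 - q)^-1)%:E); last exact: ltry.
apply: lime_le; first by apply: is_cvg_nneseries => n _ _; rewrite lee_fin exprn_ge0 ?ltW.
apply: nearW => n; rewrite sumEFin lee_fin -[X in _ <= X]mul1r.
rewrite (_ : \sum_(0 <= k < n) q ^+ k = series (geometric 1 q) n); last first.
  by apply: eq_bigr => k _; rewrite /geometric /= mul1r.
by apply: geometric_le_lim => //; rewrite gtr0_norm.
Qed.

Lemma ae_forall_nat {d} {T : measurableType d} {R : realType}
    (mu : {measure set T -> \bar R}) (Q : nat -> T -> Prop) :
  (forall k, {ae mu, forall w, Q k w}) -> {ae mu, forall w, forall k, Q k w}.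
Proof.
move=> aeQ; apply: negligibleS (negligible_bigcup aeQ) => w /= nQ.
by apply: contrapT => nex; apply: nQ => k; apply: contrapT => nq; apply: nex; exists k.
Qed.

Lemma ae_cvg_of_dist_le {d} {T : measurableType d} {R : realType}
    (mu : {measure set T -> \bar R}) (u : T -> nat -> R) (l : R) :
  (forall e, 0 < e -> {ae mu, forall w, \forall n \near \oo, `|l - u w n| <= e}) ->
  {ae mu, forall w, u w @ \oo --> l}.
Proof.
move=> near_l.
have near_inv k : {ae mu, forall w, \forall n \near \oo, `|l - u w n| <= k.+1%:R^-1}.
  by apply: near_l; rewrite invr_gt0.
have := ae_forall_nat mu _ near_inv.
apply: filterS => w near_lw; apply/cvgrPdist_le => e e0.
apply: filterS (near_lw (Num.truncn e^-1)) => n /le_trans; apply.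
by rewrite invf_ple ?posrE // ltW // truncnS_gt.
Qed.

Lemma chernoff_rate {R : realType} {p c : R} : 0 <= p -> p < c ->
  exists2 lam : R, 0 <= lam & 0 < (p * expR lam + (1 - p)) / expR (lam * c) < 1.
Proof.
move=> p0 pc; have c0 : 0 < c by lra.
(* For lam := (c - p) / (2 c), the bounds expR lam <= 1 / (1 - lam) and
   1 + lam c <= expR (lam c) reduce the claim to p < (c + p) / 2. *)
pose lam := (c - p) / (2 * c).
have lam0 : 0 < lam by apply: divr_gt0; lra.
have lam1 : lam < 1 by rewrite ltr_pdivrMr; lra.
have lamc : lam * c = (c - p) / 2 by rewrite /lam; field; rewrite gt_eqF.
have e1 : expR lam <= (1 - lam)^-1.
  have := expR_ge1Dx (- lam); rewrite expRN => h.
  rewrite -[X in X <= _]invrK lef_pV2 ?posrE ?invr_gt0 ?expR_gt0 //; lra.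
have e2 : 1 + lam * c <= expR (lam * c) by apply: expR_ge1Dx.
have ge1 : 1 <= expR lam by have := expR_ge1Dx lam; lra.
exists lam; first exact: ltW.
have num_gt0 : 0 < p * expR lam + (1 - p) by nra.
rewrite divr_gt0 ?expR_gt0 //=.
rewrite ltr_pdivrMr ?expR_gt0 // mul1r.
apply: le_lt_trans (_ : p * (1 - lam)^-1 + (1 - p) < _).
  by rewrite lerD2r ler_wpM2l.
apply: lt_le_trans e2.
rewrite -ltrBrDr ltr_pdivrMr; last lra.
rewrite lamc; nra.
Qed.

Section bernoulli_sequence.
Context {R : realType} {d} {Omega : measurableType d} (P : probability Omega R).

Definition bernoulli_seq (a : nat -> Omega -> bool) (p : R) : Prop :=
  (forall i, measurable [set w | a i w]) /\
  forall (s : seq nat) (b : nat -> bool), uniq s ->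
    P (\bigcap_(i in [set` s]) [set w | a i w == b i]) =
    (\prod_(i <- s) (if b i then p else 1 - p))%:E.

Lemma bernoulli_seq_param {a p} : bernoulli_seq a p -> 0 <= p <= 1.
Proof.
move=> [ma Pa]; rewrite -!lee_fin; have := Pa [:: 0%N] (fun _ => true) erefl.
rewrite set_cons1 bigcap_set1 big_seq1 (set_eqbE (a 0%N) true) /= => <-.
by rewrite measure_ge0 probability_le1.
Qed.

Lemma bernoulli_seq_negb {a p} : bernoulli_seq a p ->
  bernoulli_seq (fun i w => ~~ a i w) (1 - p).
Proof.
move=> [ma Pa]; split => [i|s b us].
  have -> : [set w | ~~ a i w] = ~` [set w | a i w].
    by apply/seteqP; split => w /= /negP.
  exact: measurableC.
have -> : \bigcap_(i in [set` s]) [set w | ~~ a i w == b i] =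
          \bigcap_(i in [set` s]) [set w | a i w == ~~ b i].
  apply: eq_bigcapr => i _.
  by apply/seteqP; split => w /=; case: (a i w); case: (b i).
rewrite Pa //; congr (_%:E); apply: eq_bigr => i _.
by case: (b i); rewrite //= opprB addrC subrK.
Qed.

Variables (a : nat -> Omega -> bool) (p : R).
Hypothesis ha : bernoulli_seq a p.

Definition successes n w := count (a^~ w) (iota 0 n).

Definition outcome n w : {ffun 'I_n -> bool} := [ffun j : 'I_n => a j w].

Definition extend_false {n} (b : {ffun 'I_n -> bool}) (i : nat) : bool :=
  if insub i is Some j then b j else false.

Definition ntrue {n} (b : {ffun 'I_n -> bool}) : nat := \sum_(j < n) b j.

Lemma ntrue_outcome n w : ntrue (outcome n w) = successes n w.
Proof.
rewrite /successes -sum1_count big_mkcond /= iota0_index_iota big_mkord.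
by apply: eq_bigr => j _; rewrite ffunE; case: (a j w).
Qed.

Lemma outcome_preimageE n (b : {ffun 'I_n -> bool}) :
  [set w | outcome n w = b] =
  \bigcap_(i in [set` iota 0 n]) [set w | a i w == extend_false b i].
Proof.
apply/seteqP; split => w /=.
  move=> <- i /=; rewrite mem_iota /extend_false => /andP[_ ilt].
  by case: insubP => [j _ <-|]; rewrite ?ffunE ?ilt.
move=> Hw; apply/ffunP => j; rewrite ffunE.
have /eqP : a j w == extend_false b j by apply: Hw; rewrite /= mem_iota ltn_ord.
by rewrite /extend_false valK.
Qed.

Lemma measurable_outcome n b : measurable [set w | outcome n w = b].
Proof.
rewrite outcome_preimageE; apply: bigcap_measurableType => i _.
rewrite set_eqbE; case: ifP => _; [exact: ha.1|exact: measurableC (ha.1 i)].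
Qed.

Lemma prob_outcome n b : P [set w | outcome n w = b] =
  (\prod_(j < n) (if b j then p else 1 - p))%:E.
Proof.
rewrite outcome_preimageE ha.2 ?iota_uniq // iota0_index_iota big_mkord.
by congr (_%:E); apply: eq_bigr => j _; rewrite /extend_false valK.
Qed.

Lemma successes_geE (c : R) n :
  [set w | c * n%:R <= (successes n w)%:R] =
  \big[setU/set0]_(b : {ffun 'I_n -> bool} | c * n%:R <= (ntrue b)%:R)
    [set w | outcome n w = b].
Proof.
rewrite -bigcup_seq_cond; apply/seteqP; split => w /=.
  by move=> cw; exists (outcome n w) => //=; rewrite mem_index_enum ntrue_outcome.
by move=> [b /= /andP[_ cb] wb]; rewrite -ntrue_outcome wb.
Qed.

Lemma sum_prob_outcome_expR (lam : R) n :
  \sum_(b : {ffun 'I_n -> bool})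
     (\prod_(j < n) (if b j then p else 1 - p)) * expR (lam * (ntrue b)%:R) =
  (p * expR lam + (1 - p)) ^+ n.
Proof.
pose F (x : bool) := (if x then p else 1 - p) * expR (lam * (x : nat)%:R).
transitivity (\sum_(b : {ffun 'I_n -> bool}) \prod_(j < n) F (b j)).
  apply: eq_bigr => b _; rewrite big_split /=; congr (_ * _).
  by rewrite /ntrue natr_sum mulr_sumr expR_sum.
rewrite -(bigA_distr_bigA (fun _ => F)) /=; under eq_bigr do rewrite big_bool.
by rewrite prodr_const card_ord /F /= mulr1 mulr0 expR0 mulr1.
Qed.

Lemma prob_successes_ge (c lam : R) n : 0 <= lam ->
  (P [set w | (c * n%:R <= (successes n w)%:R)%R] <=
   (((p * expR lam + (1 - p)) / expR (lam * c)) ^+ n)%:E)%E.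
Proof.
move=> lam0; have /andP[p0 p1] := bernoulli_seq_param ha.
have weight_ge0 (b : {ffun 'I_n -> bool}) :
    0 <= \prod_(j < n) (if b j then p else 1 - p).
  by apply: prodr_ge0 => j _; case: (b j); rewrite ?subr_ge0.
rewrite successes_geE.
apply: le_trans (measure_bigsetU_le P _ _ _ (measurable_outcome n)) _.
rewrite (eq_bigr _ (fun b _ => prob_outcome n b)).
rewrite sumEFin lee_fin expr_div_n -sum_prob_outcome_expR mulr_suml.
(* exponential Markov bound: expR (lam (ntrue b - c n)) >= 1 on the outcomes counted *)
rewrite [leRHS](bigID (fun b => c * n%:R <= (ntrue b)%:R)) /= ler_wpDr //.
  apply: sumr_ge0 => b _; apply: divr_ge0; last by rewrite exprn_ge0 ?expR_ge0.
  by rewrite mulr_ge0 ?expR_ge0.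
apply: ler_sum => b cb; rewrite -mulrA ler_peMr // ler_pdivlMr ?exprn_gt0 ?expR_gt0 //.
by rewrite mul1r -expRM_natl ler_expR mulrCA ler_wpM2l // mulrC.
Qed.

Lemma successes_lt_ae (c : R) : p < c ->
  {ae P, forall w, \forall n \near \oo, (successes n w)%:R < c * n%:R}.
Proof.
move=> pc; have /andP[p0 _] := bernoulli_seq_param ha.
have [lam lam0 q01] := chernoff_rate p0 pc.
have mF n : measurable [set w | c * n%:R <= (successes n w)%:R].
  by rewrite successes_geE; apply: bigsetU_measurable => b _; exact: measurable_outcome.
have sumF : (\sum_(n <oo) P [set w | (c * n%:R <= (successes n w)%:R)%R] < +oo)%E.
  apply: le_lt_trans (nneseries_geometric_lty q01).
  by apply: lee_nneseries => [n _ _|n _]; [exact: measure_ge0|exact: prob_successes_ge].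
apply: filterS (borel_cantelli_ae P mF sumF) => w.
by apply: filterS => n /=; rewrite ltNge => /negP.
Qed.

End bernoulli_sequence.
Arguments successes_lt_ae {R d Omega P a p} ha c.

Lemma successes_negb {d} {Omega : measurableType d} (a : nat -> Omega -> bool) n w :
  successes (fun i w => ~~ a i w) n w = (n - successes a n w)%N.
Proof. by rewrite /successes -{2}(size_iota 0 n) -(count_predC (a^~ w)) addKn. Qed.

Lemma successes_gt_ae {R : realType} {d} {Omega : measurableType d}
    {P : probability Omega R} {a : nat -> Omega -> bool} {p c : R} :
  bernoulli_seq P a p -> c < p ->
  {ae P, forall w, \forall n \near \oo, c * n%:R < (successes a n w)%:R}.
Proof.
move=> ha cp; have cp' : 1 - p < 1 - c by lra.
have := successes_lt_ae (bernoulli_seq_negb P ha) _ cp'.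
apply: filterS => w; apply: filterS => n.
have sn : (successes a n w <= n)%N by rewrite -{2}(size_iota 0 n) count_size.
rewrite successes_negb natrB //; lra.
Qed.

Section profile.
Context {R : realType} {X : Type} {f : X -> R -> R}.
Hypothesis hf : cont_cond_density f.
Variable x : X.
Local Notation mu := (@lebesgue_measure R).

Let f_ge0 y : 0 <= f x y. Proof. by have [] := hf x. Qed.
Let mf : measurable_fun setT (f x). Proof. by have [] := hf x. Qed.
Let f_int1 : (\int[mu]_y (f x y)%:E = 1)%E. Proof. by have [] := hf x. Qed.
Let f_cont : continuous (f x). Proof. by have [] := hf x. Qed.

Lemma measurable_superlevel t : measurable [set y | t <= f x y].
Proof.
have := mf measurableT _ (measurable_itv `[t, +oo[); rewrite setTI.
by congr measurable; apply/seteqP; split => y /=; rewrite in_itv /= andbT.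
Qed.

Let mEf (D : set R) : measurable_fun D (EFin \o f x).
Proof. by apply/measurable_EFinP; exact: measurable_funS mf. Qed.

Lemma profile_ge0 t : (0 <= profile f x t)%E.
Proof. by apply: integral_ge0 => y _; rewrite lee_fin. Qed.

Lemma profile_le1 t : (profile f x t <= 1)%E.
Proof.
rewrite -f_int1; apply: ge0_subset_integral => //.
- exact: measurable_superlevel.
- exact: mEf.
- by move=> y _; rewrite lee_fin.
Qed.

Lemma profile_fin_num t : profile f x t \is a fin_num.
Proof.
by rewrite ge0_fin_numE ?profile_ge0 // (le_lt_trans (profile_le1 t)) ?ltry.
Qed.

Lemma profile0 : profile f x 0 = 1%E.
Proof.
by rewrite -f_int1 /profile; congr integral; apply/seteqP; split => y //= _.
Qed.

Lemma profile_empty t : ~ (exists y, t <= f x y) -> profile f x t = 0%E.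
Proof.
move=> nt; rewrite /profile (_ : [set y | t <= f x y] = set0) ?integral_set0 //.
by apply/seteqP; split => y //= ty; apply: nt; exists y.
Qed.

Lemma density_lt_somewhere a : 0 < a -> exists z, f x z < a.
Proof.
move=> a0; apply: contrapT => nz.
have ge_a z : a <= f x z by rewrite leNgt; apply/negP => za; apply: nz; exists z.
have : (\int[mu]_(y in [set: R]) (cst a%:E) y <= \int[mu]_y (f x y)%:E)%E.
  apply: ge0_le_integral => //; first by move=> y _; rewrite lee_fin ltW.
  - exact: mEf.
  - by move=> y _; rewrite lee_fin ge_a.
rewrite f_int1 integral_cst // -set_itvNyy.
have := @lebesgue_measure_itv R `]-oo, +oo[; rewrite /= => ->.
by rewrite addey // gt0_muley ?lte_fin // leye_eq.
Qed.

Lemma density_between s t : 0 < s < t -> (exists y, t <= f x y) ->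
  exists c, s < f x c < t.
Proof.
move=> /andP[s0 st] [y ty]; have [z zs] := density_lt_somewhere _ s0.
suff [c fc] : exists c, f x c = (s + t) / 2 by exists c; rewrite fc; apply/andP; split; lra.
have mid : Num.min (f x z) (f x y) <= (s + t) / 2 <= Num.max (f x z) (f x y).
  by rewrite ge_min le_max; apply/andP; split; apply/orP; [left|right]; lra.
have [zy|yz] := leP z y.
  by have [c _ fc] := IVT zy (continuous_subspaceT f_cont) mid; exists c.
rewrite minC maxC in mid.
by have [c _ fc] := IVT (ltW yz) (continuous_subspaceT f_cont) mid; exists c.
Qed.

Lemma profile_add_le s t (A : set R) : s <= t -> measurable A ->
  A `<=` [set z | s <= f x z < t] ->
  (profile f x t + \int[mu]_(z in A) (f x z)%:E <= profile f x s)%E.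
Proof.
move=> st mA As; rewrite /profile -ge0_integral_setU //; first last.
- rewrite disj_set2E; apply/eqP/seteqP; split => // z [/= tz /As /andP[_ zt]].
  by move: tz; rewrite leNgt zt.
- by move=> z _; rewrite lee_fin.
- exact: mEf.
- exact: measurable_superlevel.
apply: ge0_subset_integral => //.
- exact: measurableU (measurable_superlevel t) mA.
- exact: measurable_superlevel.
- exact: mEf.
- by move=> z _; rewrite lee_fin.
- by move=> z [/= tz|/As /andP[//]]; apply: le_trans tz.
Qed.

Lemma profile_le s t : s <= t -> (profile f x t <= profile f x s)%E.
Proof.
move=> st; have := profile_add_le s t set0 st measurable0 (sub0set _).
by rewrite integral_set0 adde0.
Qed.

Lemma profile_lt s t : 0 < s < t -> (0 < profile f x s)%E ->
  (profile f x t < profile f x s)%E.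
Proof.
move=> st ps; have [tf|nt] := pselect (exists y, t <= f x y); last first.
  by rewrite profile_empty.
have [c /andP[sc ct]] := density_between _ _ st tf.
have [del del0 ball_sub] : exists2 del : R, 0 < del &
    ball c del `<=` [set z | s < f x z < t].
  have e0 : 0 < Num.min (f x c - s) (t - f x c) by rewrite lt_min; apply/andP; split; lra.
  have /cvgr_dist_lt/(_ _ e0)/nbhs_ballP[del /= del0 cdel] := f_cont c.
  exists del => // z /cdel; rewrite lt_min !ltr_distlC => /andP[/andP[h1 h2] /andP[h3 h4]].
  apply/andP; split; lra.
have ball_pos : (0 < \int[mu]_(z in ball c del) (f x z)%:E)%E.
  apply: (@lt_le_trans _ _ (\int[mu]_(z in ball c del) (cst s%:E) z)%E).
    rewrite integral_cst; last exact: measurable_ball.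
    have := lebesgue_measure_ball c (ltW del0); rewrite /= => ->.
    by rewrite -EFinM lte_fin mulr_gt0 ?(andP st).1 // mulrn_wgt0.
  apply: ge0_le_integral => //.
  - exact: measurable_ball.
  - by move=> z _; rewrite lee_fin ltW ?(andP st).1.
  - exact: mEf.
  - by move=> z /ball_sub /andP[sz _]; rewrite lee_fin ltW.
have fin_t := profile_fin_num t.
apply: lt_le_trans _ (profile_add_le _ _ _ (ltW (andP st).2) (measurable_ball c del) _).
  by rewrite lteDl.
by move=> z /ball_sub /andP[sz zt]; rewrite /= zt ltW.
Qed.

End profile.

Lemma emp_quantile_bounds {R : realType} (al s t : R) (l : seq R) :
  (count (fun z => t <= z) l)%:R < (1 - al) * (size l)%:R ->
  (1 - al) * (size l)%:R < (count (fun z => s <= z) l)%:R ->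
  s <= emp_quantile al l <= t.
Proof.
move=> tail_t tail_s.
set S := [set u | al * (size l)%:R <= (count (fun z => z <= u) l)%:R].
have St : S t.
  have : (count (predC (fun z : R => z <= t)%R) l <= count (fun z : R => t <= z)%R l)%N.
    by apply: sub_count => z /=; rewrite -ltNge => /ltW.
  rewrite /S /= -(ler_nat R) => le_tail.
  have := count_predC (fun z : R => z <= t) l => /(congr1 (GRing.natmul (1 : R))).
  rewrite natrD => size_split; lra.
have s_lb : lbound S s.
  move=> u Su; rewrite /S /= in Su; rewrite leNgt; apply/negP => us.
  have : (count (fun z : R => z <= u)%R l <= count (predC (fun z : R => s <= z)%R) l)%N.
    by apply: sub_count => z /= zu; rewrite -ltNge (le_lt_trans zu).
  rewrite -(ler_nat R) => le_head.
  have := count_predC (fun z : R => s <= z) l => /(congr1 (GRing.natmul (1 : R))).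
  rewrite natrD => size_split; lra.
by rewrite lb_le_inf ?ge_inf //; [exists s|exists t].
Qed.

Section superlevel_scores.
Context {R : realType} {X : Type} {f : X -> R -> R} {d} {Omega : measurableType d}
  (P : probability Omega R) (x0 : X) (x : nat -> X) (Y : nat -> Omega -> R).
Hypotheses (hf : cont_cond_density f) (hind : mutually_independent P Y)
  (hdens : forall i, has_density P (Y i) (f (x i)))
  (hprof : forall i t, 0 <= t -> profile f (x i) t = profile f x0 t).

Lemma superlevel_scores_bernoulli s : 0 <= s ->
  bernoulli_seq P (fun i w => s <= f (x i) (Y i w)) (fine (profile f x0 s)).
Proof.
move=> s0; have mlev i : measurable [set y | s <= f (x i) y].
  exact: measurable_superlevel.
have mA i : measurable [set w | s <= f (x i) (Y i w)].
  by have [mY _] := hdens i; have := mY measurableT _ (mlev i); rewrite setTI.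
have PA i : P [set w | s <= f (x i) (Y i w)] = (fine (profile f x0 s))%:E.
  have [_ PY] := hdens i; transitivity (profile f (x i) s); first exact: PY.
  by rewrite hprof // fineK // profile_fin_num.
split => // sq b usq.
have mB i : measurable [set y | (s <= f (x i) y) == b i].
  by rewrite set_eqbE; case: (b i); [exact: mlev|exact: measurableC (mlev i)].
rewrite (hind sq _ usq mB) -prodEFin; apply: eq_bigr => i _.
rewrite /preimage /= set_eqbE; case: (b i); first exact: PA.
by rewrite probability_setC // PA.
Qed.

Lemma emp_quantile_superlevel_near (alpha tstar e : R) :
  0 < alpha < 1 -> 0 < tstar -> profile f x0 tstar = (1 - alpha)%:E -> 0 < e ->
  {ae P, forall w, \forall m \near \oo,
    `|tstar - emp_quantile alpha [seq f (x i) (Y i w) | i <- iota 0 m]| <= e}.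
Proof.
move=> /andP[al0 al1] t0 ht e0.
have pt_gt0 : (0 < profile f x0 tstar)%E by rewrite ht lte_fin subr_gt0.
pose hi := tstar + e; pose lo := tstar - Num.min e tstar / 2.
have [lo0 lot elo] : [/\ 0 < lo, lo < tstar & tstar - e < lo].
  have /andP[me mt] : (Num.min e tstar <= e) && (Num.min e tstar <= tstar).
    by rewrite -le_min.
  have : 0 < Num.min e tstar by rewrite lt_min e0.
  by rewrite /lo; split; lra.
have hi_lt : fine (profile f x0 hi) < 1 - alpha.
  rewrite -lte_fin fineK ?profile_fin_num // -ht.
  by apply: (profile_lt hf); rewrite // t0 /hi; lra.
have lo_gt : 1 - alpha < fine (profile f x0 lo).
  rewrite -lte_fin fineK ?profile_fin_num // -ht.
  apply: (profile_lt hf); first exact/andP.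
  exact: lt_le_trans pt_gt0 (profile_le hf x0 _ _ (ltW lot)).
have hi0 : 0 <= hi by rewrite /hi; lra.
have Up := successes_lt_ae (superlevel_scores_bernoulli _ hi0) _ hi_lt.
have Lo := successes_gt_ae (superlevel_scores_bernoulli _ (ltW lo0)) lo_gt.
apply: filterS2 Up Lo => w Uw Lw; apply: filterS2 Uw Lw => m Um Lm.
have /andP[loq qhi] : lo <= emp_quantile alpha [seq f (x i) (Y i w) | i <- iota 0 m] <= hi.
  by apply: emp_quantile_bounds; rewrite count_map size_map size_iota.
by rewrite ler_distlC (le_trans (ltW elo) loq) qhi.
Qed.

End superlevel_scores.

Theorem theorem4 (R : realType) (X : Type) (f : X -> R -> R)
  (d : measure_display) (Omega : measurableType d) (P : probability Omega R)
  (x0 : X) (x : nat -> X) (Y : nat -> Omega -> R) (alpha tstar : R) :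
  cont_cond_density f ->
  mutually_independent P Y ->
  (forall i, has_density P (Y i) (f (x i))) ->
  (forall i t, 0 <= t -> profile f (x i) t = profile f x0 t) ->
  0 < alpha < 1 ->
  0 <= tstar ->
  profile f x0 tstar = (1 - alpha)%:E ->
  {ae P, forall w, (fun m : nat =>
      emp_quantile alpha [seq f (x i) (Y i w) | i <- iota 0 m]) @ \oo --> tstar}.
Proof.
move=> hf hind hdens hprof alpha01 tstar0 htstar.
have tstar_gt0 : 0 < tstar.
  rewrite lt_neqAle tstar0 andbT; apply/eqP => tstar_eq0.
  move: htstar; rewrite -tstar_eq0 profile0 // => -[]; case/andP: alpha01; lra.
apply: ae_cvg_of_dist_le => e e0.
exact: (emp_quantile_superlevel_near P x0 x Y hf hind hdens hprof
  _ _ _ alpha01 tstar_gt0 htstar e0).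
Qed.
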